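(* Let $X\subseteq\{0,1\}^{\mathbb Z}$ be a measure-theoretically subordinate subshift. Then the base measure $\nu$ of $X$ is unique and ergodic. Moreover, $\nu$ is the unique measure in $\mathcal M(X)$ satisfying \[ \nu(1)=\sup_{\mu\in\mathcal M(X)}\mu(1), \] where for a measure $\mu$ on $\{0,1\}^{\mathbb Z}$ we write $\mu(1)=\mu(\{x: x_0=1\})$.
   Context: $\sigma$ denotes the left shift on $\{0,1\}^{\mathbb Z}$; a subshift is a closed $\sigma$-invariant subset. For a subshift (or product of subshifts) $Y$, $\mathcal M(Y)$ denotes the set of Borel probability measures on $Y$ invariant under the (product) shift. Let $M\colon\{0,1\}^{\mathbb Z}\times\{0,1\}^{\mathbb Z}\to\{0,1\}^{\mathbb Z}$ be coordinatewise multiplication, $M(x,y)_n=x_ny_n$, and $\pi_1$ the projection onto the first coordinate. A subshift $X\subseteq\{0,1\}^{\mathbb Z}$ is a measure-theoretically subordinate subshift if there exists $\nu\in\mathcal M(\{0,1\}^{\mathbb Z})$ such that $\mathcal M(X)=\{M_*(\lambda):\lambda\in\mathcal M(\{0,1\}^{\mathbb Z}\times\{0,1\}^{\mathbb Z},\sigma\times\sigma),\ (\pi_1)_*\lambda=\nu\}$; any such $\nu$ is called a base measure. *)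

From HB Require Import structures.
From mathcomp Require Import all_boot all_order all_algebra.
From mathcomp Require Import all_classical all_reals all_analysis.
Set Implicit Arguments. Unset Strict Implicit. Unset Printing Implicit Defensive.
Import Order.TTheory GRing.Theory Num.Theory.
Local Open Scope classical_set_scope.
Local Open Scope ring_scope.

Definition config := int -> bool.

Definition cyl_gen : set (set config) :=
  [set A | exists (n : int) (b : bool), A = [set x | x n = b]].

Definition Conf := g_sigma_algebraType cyl_gen.
Definition conf_display := sigma_display cyl_gen.

Definition shift (x : Conf) : Conf := fun n => x (n + 1).

Definition Mmul (xy : (Conf * Conf)%type) : Conf := fun n => xy.1 n && xy.2 n.

(* closed subsets of {0,1}^Z (product of discrete topologies): every point
   outside X has a cylinder neighbourhood [-N,N] disjoint from X *)
Definition closed_conf (X : set Conf) : Prop :=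
  forall x : Conf, ~ X x -> exists N : nat,
    forall y : Conf, (forall n : int, `|n| <= N%:Z -> y n = x n) -> ~ X y.

Definition subshift (X : set Conf) : Prop :=
  closed_conf X /\ shift @` X = X.

Definition shift_invariant (R : realType) (mu : probability Conf R) : Prop :=
  forall A : set Conf, measurable A -> mu (shift @^-1` A) = mu A.

Definition shift2_invariant (R : realType)
    (lam : probability (Conf * Conf)%type R) : Prop :=
  forall A : set (Conf * Conf)%type, measurable A ->
    lam ((fun xy : (Conf * Conf)%type => (shift xy.1, shift xy.2)) @^-1` A)
    = lam A.

Definition inM (R : realType) (X : set Conf) (mu : probability Conf R) : Prop :=
  shift_invariant mu /\ mu (~` X) = 0%E.

Definition base_measure (R : realType) (X : set Conf) (nu : probability Conf R)
  : Prop :=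
  shift_invariant nu /\
  forall mu : probability Conf R,
    inM X mu <->
    exists lam : probability (Conf * Conf)%type R,
      shift2_invariant lam /\
      (forall A : set Conf, measurable A -> lam (fst @^-1` A) = nu A) /\
      (forall A : set Conf, measurable A -> mu A = lam (Mmul @^-1` A)).

Definition mt_subordinate (R : realType) (X : set Conf) : Prop :=
  subshift X /\ exists nu : probability Conf R, base_measure X nu.

Definition ergodic (R : realType) (mu : probability Conf R) : Prop :=
  shift_invariant mu /\
  forall A : set Conf, measurable A -> shift @^-1` A = A ->
    mu A = 0%E \/ mu A = 1%E.

Definition one_cyl : set Conf := [set x | x 0 = true].

(* If [lam] couples a base measure [nu] (first marginal) with [mu] in M(X)
   (image under M), then mu[1] = lam(x_0 = y_0 = 1) <= lam(x_0 = 1) = nu[1],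
   and equality forces lam(x_0 = 1, y_0 = 0) = 0.  By shift invariance of [lam]
   all events {x_n = 1, y_n = 0} are then null, so M(x, y) = x almost surely and
   mu = nu.  Since nu itself lies in M(X) (couple it with the constant sequence
   1), nu is the unique maximiser of mu[1] on M(X); in particular the base
   measure is unique.  If A were invariant with 0 < nu(A) < 1, then nu[1] would
   be a proper convex combination of the values of nu( . | A) and
   nu( . | ~A), both in M(X), so nu( . | A) would maximise too and equal nu,
   which fails on A. *)

From Pilot Require Import Defs.
From HB Require Import structures.
From mathcomp Require Import all_boot all_order all_algebra.
From mathcomp Require Import all_classical all_reals all_analysis.
From mathcomp Require Import lra.
Import Order.TTheory GRing.Theory Num.Theory.
Local Open Scope classical_set_scope.
Local Open Scope ring_scope.
Local Open Scope ereal_scope.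

Lemma measure_preimage_ae_eq d (T : measurableType d) (R : realFieldType) (U : Type)
    (mu : {measure set T -> \bar R}) (f g : T -> U) (B : set U) :
  measurable (f @^-1` B) -> measurable (g @^-1` B) ->
  {ae mu, forall x, f x = g x} -> mu (f @^-1` B) = mu (g @^-1` B).
Proof.
move=> mf mg [N [mN N0 fgN]].
have offN C : measurable C -> mu C = mu (C `\` N).
  move=> mC; rewrite (measureDI mu mC mN).
  by rewrite (subset_measure0 (measurableI _ _ mC mN) mN (@subIsetr _ _ _) N0) adde0.
rewrite (offN _ mf) (offN _ mg); congr (mu _).
apply/seteqP; split => x [Bx Nx]; have fg : f x = g x := contra_notP (@fgN x) Nx.
- by split => //; rewrite /preimage /= -fg.
- by split => //; rewrite /preimage /= fg.
Qed.

Lemma measurable_cyl (n : int) (b : bool) : measurable [set x : Conf | x n = b].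
Proof. by apply: sub_sigma_algebra; exists n, b. Qed.

Lemma measurable_fun_into_Conf d (T : measurableType d) (f : T -> Conf) :
  (forall n b, measurable (f @^-1` [set x : Conf | x n = b])) ->
  measurable_fun setT f.
Proof.
move=> mf; apply: (@measurability _ _ _ Conf _ _ cyl_gen) => //.
by move=> _ [_ [n [b ->]] <-]; rewrite setTI.
Qed.

Lemma measurable_fun_shift : measurable_fun setT Defs.shift.
Proof. by apply: measurable_fun_into_Conf => n b; exact: measurable_cyl. Qed.

HB.instance Definition _ :=
  isMeasurableFun.Build _ _ _ _ Defs.shift measurable_fun_shift.

Definition cyl2 (n : int) (b c : bool) : set (Conf * Conf) :=
  [set xy | xy.1 n = b /\ xy.2 n = c].

Lemma measurable_cyl2 n b c : measurable (cyl2 n b c).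
Proof.
have -> : cyl2 n b c = [set x : Conf | x n = b] `*` [set x : Conf | x n = c] by [].
by apply: measurableX; exact: measurable_cyl.
Qed.

Lemma Mmul_preimage_one n :
  Mmul @^-1` [set x : Conf | x n = true] = cyl2 n true true.
Proof.
apply/seteqP; split => -[x y]; rewrite /cyl2 /Mmul /=.
  by case: (x n); case: (y n).
by case=> -> ->.
Qed.

Lemma measurable_fun_Mmul : measurable_fun setT Mmul.
Proof.
apply: measurable_fun_into_Conf => n [].
  by rewrite Mmul_preimage_one; exact: measurable_cyl2.
have -> : Mmul @^-1` [set x : Conf | x n = false] =
          ~` (Mmul @^-1` [set x : Conf | x n = true]).
  by apply/seteqP; split => xy /=; case: (Mmul xy n).
by rewrite Mmul_preimage_one; apply: measurableC; exact: measurable_cyl2.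
Qed.

HB.instance Definition _ := isMeasurableFun.Build _ _ _ _ Mmul measurable_fun_Mmul.

Definition pair_ones (x : Conf) : Conf * Conf := (x, fun=> true).

Lemma measurable_fun_pair_ones : measurable_fun setT pair_ones.
Proof. by apply: measurable_fun_pair; [exact: measurable_id | exact: measurable_cst]. Qed.

HB.instance Definition _ :=
  isMeasurableFun.Build _ _ _ _ pair_ones measurable_fun_pair_ones.

Lemma Mmul_pair_ones x : Mmul (pair_ones x) = x.
Proof. by apply/funext => n; rewrite /Mmul andbT. Qed.

Section conditional_probability.
Context {d} {T : measurableType d} {R : realType} (P : probability T R).
Context {A : set T} (mA : measurable A).

(* Set to 0 off the measurable sets, so that [pcond (~` X) = 0] holds even when
   [X] is not known to be measurable. *)
Definition pcond (B : set T) : \bar R :=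
  if `[< measurable B >] then mnormalize (mrestr P mA) P B else 0.

Let pcond0 : pcond set0 = 0.
Proof. by rewrite /pcond asboolT // measure0. Qed.

Let pcond_ge0 B : 0 <= pcond B.
Proof. by rewrite /pcond; case: asboolP. Qed.

Let pcond_sigma_additive : semi_sigma_additive pcond.
Proof.
move=> F mF tF mUF; rewrite /pcond asboolT //.
under eq_fun do under eq_bigr do rewrite asboolT //.
exact: measure_semi_sigma_additive.
Qed.

HB.instance Definition _ := isMeasure.Build _ _ _ pcond
  pcond0 pcond_ge0 pcond_sigma_additive.

Let pcond_setT : pcond setT = 1.
Proof. by rewrite /pcond asboolT // probability_setT. Qed.

HB.instance Definition _ := Measure_isProbability.Build _ _ _ pcond pcond_setT.

Lemma pcondE B : measurable B -> P A != 0 ->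
  pcond B = (fine (P (B `&` A)) / fine (P A))%:E.
Proof.
move=> mB PA0; rewrite /pcond asboolT // /mnormalize /= /mrestr setTI.
rewrite (negbTE PA0) lt_eqF ?(le_lt_trans (probability_le1 P mA)) ?ltey //=.
by rewrite -(fineK (fin_num_measure P _ (measurableI _ _ mB mA))) -EFinM.
Qed.

Lemma pcond_nonmeasurable B : ~ measurable B -> pcond B = 0.
Proof. by move=> mB; rewrite /pcond asboolF. Qed.

End conditional_probability.

Section shift2_invariant_measure.
Context {R : realType} {lam : probability (Conf * Conf)%type R}.
Hypothesis lam_inv : shift2_invariant lam.

Lemma shift2_invariant_cyl2 n b c : lam (cyl2 n b c) = lam (cyl2 0 b c).
Proof.
elim/int_rect: n => [//|n IH|n IH].
- by rewrite -IH -(lam_inv _ (measurable_cyl2 n b c)) -addn1 PoszD.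
- rewrite -IH -(lam_inv _ (measurable_cyl2 (- n.+1%:Z) b c)).
  by congr (lam (cyl2 _ b c)); rewrite -addn1 PoszD opprD addrNK.
Qed.

Lemma Mmul_ae_fst :
  lam (cyl2 0 true false) = 0 -> {ae lam, forall xy, Mmul xy = xy.1}.
Proof.
move=> lam0.
have null_cyl2 n : lam.-negligible (cyl2 n true false).
  apply/negligibleP; first exact: measurable_cyl2.
  exact: etrans (shift2_invariant_cyl2 n true false) lam0.
apply: (negligibleS _ (negligible_bigcup
  (fun k : nat => negligibleU (null_cyl2 k) (null_cyl2 (- k%:Z)%R)))).
move=> xy /= Mxy; apply: contra_notP Mxy => uncovered; apply/funext => n.
rewrite /Mmul; case E1: (xy.1 n); case E2: (xy.2 n) => //=.
exfalso; apply: uncovered; case: n E1 E2 => k E1 E2.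
- by exists k => //; left.
- by exists k.+1 => //; right; rewrite -NegzE.
Qed.

End shift2_invariant_measure.

Section coupling.
Context {R : realType} {nu mu : probability Conf R}.
Context {lam : probability (Conf * Conf)%type R}.
Hypothesis lam_fst : forall A, measurable A -> lam (fst @^-1` A) = nu A.
Hypothesis lam_Mmul : forall A, measurable A -> mu A = lam (Mmul @^-1` A).

Lemma coupling_one_cyl : nu one_cyl = mu one_cyl + lam (cyl2 0 true false).
Proof.
have m1 : measurable one_cyl := measurable_cyl 0 true.
rewrite -lam_fst // lam_Mmul // [Mmul @^-1` _]Mmul_preimage_one.
rewrite -measureU; try exact: measurable_cyl2.
- congr (lam _); apply/seteqP; split => -[x y]; rewrite /cyl2 /one_cyl /=.
  + by move=> ->; case: (y 0%R); [left|right].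
  + by case=> -[].
- by apply/seteqP; split => -[x y] //; rewrite /cyl2 /= => -[[_ ->] []].
Qed.

Lemma coupling_one_cyl_le : mu one_cyl <= nu one_cyl.
Proof. by rewrite coupling_one_cyl leeDl. Qed.

Hypothesis lam_inv : shift2_invariant lam.

Lemma coupling_one_cyl_eq : mu one_cyl = nu one_cyl ->
  forall A, measurable A -> mu A = nu A.
Proof.
move=> mu_nu A mA.
have lam0 : lam (cyl2 0 true false) = 0.
  apply/eqP; rewrite eq_le measure_ge0 andbT leNgt.
  have m1 : measurable one_cyl := measurable_cyl 0 true.
  rewrite -(lteDl _ (fin_num_measure mu _ m1)).
  have := ltxx (nu one_cyl); rewrite -{1}mu_nu => /negbT.
  by rewrite -coupling_one_cyl.
rewrite lam_Mmul // -lam_fst //.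
apply: measure_preimage_ae_eq.
- exact: measurable_funPTI.
- by rewrite -[X in measurable X]setTI; exact: measurable_fst.
- exact: Mmul_ae_fst lam_inv lam0.
Qed.

End coupling.

Section base_measure.
Context {R : realType} {X : set Conf} {nu : probability Conf R}.
Hypothesis nu_base : base_measure X nu.

Lemma base_measure_inM : inM X nu.
Proof.
have [nu_inv nu_coupling] := nu_base.
apply/nu_coupling; exists (distribution nu pair_ones); split; [|split].
- move=> A mA; exact (nu_inv _ (measurable_funPTI pair_ones mA)).
- by [].
- move=> A mA; rewrite /distribution /pushforward.
  by congr (nu _); apply/seteqP; split => x; rewrite /preimage /= Mmul_pair_ones.
Qed.

Lemma base_measure_one_cyl_le mu : inM X mu -> mu one_cyl <= nu one_cyl.
Proof.
move=> /(nu_base.2 mu) [lam [_ [lam_fst lam_Mmul]]].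
exact: coupling_one_cyl_le lam_fst lam_Mmul.
Qed.

Lemma base_measure_one_cyl_eq mu : inM X mu -> mu one_cyl = nu one_cyl ->
  forall A, measurable A -> mu A = nu A.
Proof.
move=> /(nu_base.2 mu) [lam [lam_inv [lam_fst lam_Mmul]]].
exact: coupling_one_cyl_eq lam_fst lam_Mmul lam_inv.
Qed.

End base_measure.

Lemma pcond_inM {R : realType} {X : set Conf} {P : probability Conf R}
    {A : set Conf} (mA : measurable A) :
  inM X P -> Defs.shift @^-1` A = A -> P A != 0 -> inM X (pcond P mA).
Proof.
move=> [P_inv P_X] A_inv PA0; split.
- move=> C mC; have mSC := measurable_funPTI Defs.shift mC.
  rewrite /= !pcondE // -{1}A_inv -preimage_setI P_inv //; exact: measurableI.
- have [mX|nmX] := pselect (measurable (~` X)); last exact: (pcond_nonmeasurable P mA).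
  rewrite /= pcondE // (subset_measure0 (measurableI _ _ mX mA) mX (@subIsetl _ _ _) P_X).
  by rewrite mul0r.
Qed.

Section one_cyl_maximiser.
Context {R : realType} {X : set Conf} {nu : probability Conf R}.
Hypothesis nuX : inM X nu.
Hypothesis nu_max : forall mu, inM X mu -> mu one_cyl <= nu one_cyl.
Hypothesis nu_max_unique : forall mu, inM X mu -> mu one_cyl = nu one_cyl ->
  forall A, measurable A -> mu A = nu A.

Lemma one_cyl_maximiser_ergodic : ergodic nu.
Proof.
split; first exact: nuX.1.
move=> A mA A_inv.
have [->|nuA0] := eqVneq (nu A) 0; first by left.
have [->|nuA1] := eqVneq (nu A) 1; first by right.
exfalso.
have mAc := measurableC mA.
have Ac_inv : Defs.shift @^-1` (~` A) = ~` A by rewrite -preimage_setC A_inv.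
have m1 : measurable one_cyl := measurable_cyl 0 true.
pose a := fine (nu A).
pose m := fine (nu one_cyl).
pose p := fine (nu (one_cyl `&` A)).
pose q := fine (nu (one_cyl `&` ~` A)).
have nuAE : nu A = a%:E by rewrite fineK ?fin_num_measure.
have nuAcE : nu (~` A) = (1 - a)%:E by rewrite probability_setC // nuAE.
have a_gt0 : (0 < a)%R by rewrite -lte_fin -nuAE lt0e nuA0 measure_ge0.
have a_lt1 : (a < 1)%R by rewrite -lte_fin -nuAE lt_neqAle nuA1 probability_le1.
have nuAc0 : nu (~` A) != 0 by rewrite nuAcE eqe subr_eq0 gt_eqF.
have total : m = (p + q)%R.
  have [m1A m1Ac] := (measurableI _ _ m1 mA, measurableI _ _ m1 mAc).
  by rewrite /m (measureDI nu m1 mA) setDE fineD ?fin_num_measure // addrC.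
have := nu_max _ (pcond_inM mA nuX A_inv nuA0).
rewrite /= pcondE // -[nu one_cyl]fineK ?fin_num_measure // lee_fin.
rewrite ler_pdivrMr // => p_le.
have := nu_max _ (pcond_inM mAc nuX Ac_inv nuAc0).
rewrite /= pcondE // -[nu one_cyl]fineK ?fin_num_measure // lee_fin nuAcE /=.
rewrite ler_pdivrMr ?subr_gt0 // => q_le.
(* [m = p + q] with [p <= m a] and [q <= m (1 - a)] forces [p = m a]. *)
have p_eq : (p / a = m)%R.
  apply: (mulIf (lt0r_neq0 a_gt0)); rewrite divfK ?gt_eqF //.
  by move: p_le q_le; rewrite -/p -/q -/m -/a => p_le q_le; lra.
have pcond_one : pcond nu mA one_cyl = nu one_cyl.
  by rewrite pcondE // p_eq fineK ?fin_num_measure.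
have := nu_max_unique _ (pcond_inM mA nuX A_inv nuA0) pcond_one _ mA.
rewrite /= pcondE // setIid divff ?gt_eqF // => nuA_eq1.
by move/eqP: nuA1; apply; rewrite -nuA_eq1.
Qed.

End one_cyl_maximiser.

Theorem proposition3p1 (R : realType) (X : set Conf) :
  mt_subordinate R X ->
  exists nu : probability Conf R,
    base_measure X nu /\
    (forall nu' : probability Conf R, base_measure X nu' ->
       forall A : set Conf, measurable A -> nu' A = nu A) /\
    ergodic nu /\
    inM X nu /\
    nu one_cyl = ereal_sup [set r | exists mu : probability Conf R,
                                      inM X mu /\ mu one_cyl = r] /\
    (forall mu : probability Conf R, inM X mu ->
       mu one_cyl = ereal_sup [set r | exists mu' : probability Conf R,
                                         inM X mu' /\ mu' one_cyl = r] ->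
       forall A : set Conf, measurable A -> mu A = nu A).
Proof.
move=> [_ [nu nu_base]]; exists nu.
have nuX := base_measure_inM nu_base.
have nu_max := base_measure_one_cyl_le nu_base.
have nu_max_unique := base_measure_one_cyl_eq nu_base.
have nu_sup : nu one_cyl = ereal_sup [set r | exists mu : probability Conf R,
                                                 inM X mu /\ mu one_cyl = r].
  apply/eqP; rewrite eq_le ereal_sup_ubound /=; last by exists nu.
  by apply: ge_ereal_sup => _ [mu [muX <-]]; exact: nu_max.
split=> //; split.
  move=> nu' nu'_base; have nu'X := base_measure_inM nu'_base.
  apply: nu_max_unique => //; apply/eqP; rewrite eq_le nu_max //=.
  exact: base_measure_one_cyl_le nu'_base _ nuX.
split; first exact: one_cyl_maximiser_ergodic nuX nu_max nu_max_unique.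
by split=> //; split=> // mu muX; rewrite -nu_sup; exact: nu_max_unique.
Qed.
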